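(* Let $\mathcal U$ be a non-principal p-point ultrafilter on $\omega$ and $\mathfrak I=\{\omega\setminus X\mid X\in\mathcal U\}$ its dual ideal. If the Grigorieff forcing $\mathbb P(\mathcal U)$ satisfies Axiom A, then player II has a winning strategy in the game $\mathcal G_{\mathcal U}$.
   Context: Grigorieff forcing: $\mathbb P(\mathcal U)=\{p:\omega\to 2\mid \mathrm{dom}(p)\in\mathfrak I\}$ (partial functions), ordered by $q\le p$ iff $q\supseteq p$. A partial order $(\mathbb P,\le)$ satisfies Axiom A if there are partial orders $\le_n$ ($n\in\omega$) on $\mathbb P$ such that: (i) $p\le_0 q$ implies $p\le q$; (ii) $p\le_{n+1}q$ implies $p\le_n q$; (iii) whenever $p_0\ge_0 p_1\ge_1 p_2\ge_2\cdots$, there is $q\in\mathbb P$ with $q\le_n p_n$ for all $n$; (iv) for every $p\in\mathbb P$, $n\in\omega$ and $\mathbb P$-name $\dot\alpha$ for an ordinal, there are $q\le_n p$ and a countable set $B$ with $q\Vdash\dot\alpha\in B$. The game $\mathcal G_{\mathcal U}$: in round $n$ player I plays $I_n\in\mathfrak I$ and player II responds with a finite $F_n\subseteq I_n$; player I's moves must form a partition $\{I_n\mid n\in\omega\}$ of $\omega$; player II wins iff $\bigcup_n F_n\in\mathcal U$. A p-point ultrafilter is a non-principal ultrafilter $\mathcal U$ on $\omega$ such that for every partition $\{J_n\}$ of $\omega$ with each $J_n\notin\mathcal U$ there is $Y\in\mathcal U$ with $|Y\cap J_n|<\omega$ for all $n$. *)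

From Stdlib Require Import List.
Import ListNotations.

Definition nset := nat -> Prop.
Definition subset (X Y : nset) : Prop := forall x, X x -> Y x.
Definition finite (X : nset) : Prop := exists l : list nat, forall x, X x -> In x l.

Definition ultrafilter (U : nset -> Prop) : Prop :=
  (forall X Y, U X -> subset X Y -> U Y) /\
  (forall X Y, U X -> U Y -> U (fun x => X x /\ Y x)) /\
  ~ U (fun _ => False) /\
  (forall X, U X \/ U (fun x => ~ X x)).

Definition nonprincipal (U : nset -> Prop) : Prop :=
  forall n : nat, ~ U (fun x => x = n).

(* {J_n} is a partition of omega (pieces may be empty) *)
Definition is_partition (J : nat -> nset) : Prop :=
  (forall m n x, m <> n -> J m x -> J n x -> False) /\
  (forall x, exists n, J n x).

Definition p_point (U : nset -> Prop) : Prop :=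
  ultrafilter U /\ nonprincipal U /\
  forall J : nat -> nset, is_partition J -> (forall n, ~ U (J n)) ->
    exists Y, U Y /\ forall n, finite (fun x => Y x /\ J n x).

Definition dual_ideal (U : nset -> Prop) (Z : nset) : Prop :=
  exists X, U X /\ forall x, Z x <-> ~ X x.

(* Grigorieff forcing P(U): partial functions omega -> 2 with domain in I *)
Definition pdom (p : nat -> option bool) : nset := fun n => p n <> None.

Definition Grig (U : nset -> Prop) : Type :=
  { p : nat -> option bool | dual_ideal U (pdom p) }.

Definition grig_le {U} (q p : Grig U) : Prop :=
  forall n b, proj1_sig p n = Some b -> proj1_sig q n = Some b.

Definition partial_order {P : Type} (R : P -> P -> Prop) : Prop :=
  (forall x, R x x) /\ (forall x y z, R x y -> R y z -> R x z) /\
  (forall x y, R x y -> R y x -> x = y).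

Definition compatible {P : Type} (le : P -> P -> Prop) (p q : P) : Prop :=
  exists r, le r p /\ le r q.

Definition max_antichain {P : Type} (le : P -> P -> Prop) (A : P -> Prop) : Prop :=
  (forall a b, A a -> A b -> a <> b -> ~ compatible le a b) /\
  (forall p, exists a, A a /\ compatible le a p).

Definition countable {T : Type} (B : T -> Prop) : Prop :=
  exists e : T -> nat, forall x y, B x -> B y -> e x = e y -> x = y.

(* A (nice) name for an ordinal: a maximal antichain A together with the value
   f a assigned to each a in A.  q forces "name in B" iff every element of A
   compatible with q is sent into B. *)
Definition forces_in {P T : Type} (le : P -> P -> Prop) (q : P)
    (A : P -> Prop) (f : P -> T) (B : T -> Prop) : Prop :=
  forall a, A a -> compatible le a q -> B (f a).

Definition AxiomA {P : Type} (le : P -> P -> Prop) : Prop :=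
  exists len : nat -> P -> P -> Prop,
    (forall n, partial_order (len n)) /\
    (forall p q, len 0 p q -> le p q) /\
    (forall n p q, len (S n) p q -> len n p q) /\
    (forall ps : nat -> P, (forall n, len n (ps (S n)) (ps n)) ->
        exists q, forall n, len n q (ps n)) /\
    (forall (p : P) (n : nat) (T : Type) (A : P -> Prop) (f : P -> T),
        max_antichain le A ->
        exists q (B : T -> Prop), len n q p /\ countable B /\ forces_in le q A f B).

(* The game G_U. A strategy for II maps the list [I_0; ...; I_n] of I's moves
   so far to II's answer F_n. *)
Definition strategyII := list nset -> nset.

Definition winning_II (U : nset -> Prop) (sigma : strategyII) : Prop :=
  forall Is : nat -> nset,
    (forall n, dual_ideal U (Is n)) -> is_partition Is ->
    let F := fun n => sigma (map Is (seq 0 (S n))) in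
    (forall n, finite (F n) /\ subset (F n) (Is n)) /\
    U (fun x => exists n, F n x).

(* Fix a condition p, a level n and a set I of the dual ideal.  The conditions
   with domain exactly I form a maximal antichain, and the name "the element of
   this antichain in the generic filter" has, by Axiom A (iv), only countably
   many possible values below some q <=_n p.  If I \ dom q were infinite, a
   diagonal filling of q on I would be a value compatible with q escaping all of
   them; so I \ dom q is finite.  Player II answers I_n by I_n \ dom p_(n+1),
   where p_(n+1) <=_n p_n is such an extension of p_n.  The fusion q of the p_n
   has domain in the ideal, and every x outside dom q lies in some I_m outside
   dom p_(m+1), that is, in II's answer F_m. *)
From Stdlib Require Import List Arith Lia Classical ClassicalEpsilon ProofIrrelevance
  FunctionalExtensionality.

Lemma nth_map_seq0 {A : Type} (f : nat -> A) (m k : nat) (d : A) :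
  k < m -> nth k (map f (seq 0 m)) d = f k.
Proof.
  intro Hk. rewrite nth_indep with (d' := f 0) by (rewrite length_map, length_seq; lia).
  rewrite map_nth, seq_nth by lia. reflexivity.
Qed.

Lemma infinite_injective_enum (Y : nset) :
  ~ finite Y -> exists h : nat -> nat, (forall k, Y (h k)) /\ (forall k k', h k = h k' -> k = k').
Proof.
  intro Hinf.
  assert (Hunb : forall N, exists x, N <= x /\ Y x).
  { intro N. apply NNPP. intro Hnone. apply Hinf. exists (seq 0 N). intros x Yx.
    apply in_seq. destruct (le_lt_dec N x); [exfalso; eauto | lia]. }
  destruct (choice _ Hunb) as [g Hg].
  pose (h := fix h k := match k with 0 => g 0 | S k => g (S (h k)) end).
  assert (Hsucc : forall k, h k < h (S k)) by (intro k; simpl; destruct (Hg (S (h k))); lia).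
  assert (Hinc : forall k k', k < k' -> h k < h k').
  { intros k k' Hk. induction Hk as [|k' _ IH]; [|specialize (Hsucc k')]; auto; lia. }
  exists h. split.
  - intros [|k]; apply Hg.
  - intros k k' E. destruct (lt_eq_lt_dec k k') as [[L|L]|L];
      [apply Hinc in L | | apply Hinc in L]; lia.
Qed.

(* Diagonalize along an injective enumeration of Y. *)
Lemma countable_escape (B : (nat -> option bool) -> Prop) (Y : nset) :
  countable B -> ~ finite Y ->
  exists d : nat -> bool, forall b, B b -> exists x, Y x /\ b x <> Some (d x).
Proof.
  intros [e He] Hinf. destruct (infinite_injective_enum Y Hinf) as (h & Yh & Hinj).
  pose (hit x := exists b, B b /\ h (e b) = x /\ b x = Some true).
  exists (fun x => if excluded_middle_informative (hit x) then false else true).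
  intros b Bb. exists (h (e b)). split; [apply Yh|].
  destruct (excluded_middle_informative (hit (h (e b)))) as [Hhit|Hhit].
  - destruct Hhit as (b' & Bb' & E & Hb'). apply Hinj in E.
    rewrite (He b' b Bb' Bb E) in Hb'. congruence.
  - intro Hb. apply Hhit. exists b. destruct (b (h (e b))) as [[]|]; try discriminate; auto.
Qed.

Lemma ultrafilter_full (U : nset -> Prop) : ultrafilter U -> U (fun _ => True).
Proof.
  intros (Hup & _ & _ & Hcase). destruct (Hcase (fun _ => True)) as [H|H]; auto.
  apply Hup with (1 := H). intros x _. exact I.
Qed.

Section GrigorieffConditions.
Variable U : nset -> Prop.
Hypothesis HU : ultrafilter U.

Lemma dual_ideal_ext (Z Z' : nset) :
  dual_ideal U Z -> (forall x, Z' x <-> Z x) -> dual_ideal U Z'.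
Proof.
  intros [X [HX HZ]] E. exists X. split; auto. intro x. rewrite E. apply HZ.
Qed.

Lemma dual_ideal_union (Z1 Z2 : nset) :
  dual_ideal U Z1 -> dual_ideal U Z2 -> dual_ideal U (fun x => Z1 x \/ Z2 x).
Proof.
  intros [X1 [H1 E1]] [X2 [H2 E2]]. destruct HU as (_ & Hcap & _).
  exists (fun x => X1 x /\ X2 x). split; [auto|].
  intro x. rewrite E1, E2. tauto.
Qed.

Lemma dual_ideal_pdom_none : dual_ideal U (pdom (fun _ => None)).
Proof.
  exists (fun _ => True). split; [apply ultrafilter_full, HU|].
  intro x. unfold pdom. tauto.
Qed.

Definition empty_cond : Grig U := exist _ (fun _ => None) dual_ideal_pdom_none.

Definition fill_on (q : nat -> option bool) (I : nset) (d : nat -> bool) : nat -> option bool :=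
  fun x => if excluded_middle_informative (I x)
           then Some (match q x with Some c => c | None => d x end) else None.

Lemma pdom_fill_on q I d x : pdom (fill_on q I d) x <-> I x.
Proof.
  unfold pdom, fill_on. destruct (excluded_middle_informative (I x)); intuition discriminate.
Qed.

Lemma fill_on_undef q I d x : I x -> q x = None -> fill_on q I d x = Some (d x).
Proof.
  intros Ix qx. unfold fill_on. destruct (excluded_middle_informative (I x)); [|contradiction].
  rewrite qx. reflexivity.
Qed.

Definition fill_cond (q : Grig U) (I : nset) (HI : dual_ideal U I) (d : nat -> bool) : Grig U :=
  exist _ (fill_on (proj1_sig q) I d) (dual_ideal_ext _ _ HI (pdom_fill_on _ _ _)).

Definition merge (a q : nat -> option bool) : nat -> option bool :=
  fun x => match a x with Some c => Some c | None => q x end.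

Lemma pdom_merge a q x : pdom (merge a q) x <-> pdom a x \/ pdom q x.
Proof. unfold pdom, merge. destruct (a x); intuition discriminate. Qed.

Lemma fill_cond_compatible q I HI d : compatible (@grig_le U) (fill_cond q I HI d) q.
Proof.
  destruct q as [q0 Hq]. unfold fill_cond; simpl.
  assert (Hm : dual_ideal U (pdom (merge (fill_on q0 I d) q0))).
  { apply dual_ideal_ext with (Z := fun x => I x \/ pdom q0 x); [apply dual_ideal_union; auto|].
    intro x. rewrite pdom_merge, pdom_fill_on. tauto. }
  exists (exist (fun p => dual_ideal U (pdom p)) _ Hm). split; intros n b Hb; simpl in *; unfold merge.
  - rewrite Hb. reflexivity.
  - unfold fill_on in *. destruct (excluded_middle_informative (I n)); rewrite ?Hb; reflexivity.
Qed.

Lemma compatible_same_dom_eq (a b : Grig U) :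
  compatible (@grig_le U) a b ->
  (forall x, pdom (proj1_sig a) x <-> pdom (proj1_sig b) x) -> a = b.
Proof.
  destruct a as [a0 Ha], b as [b0 Hb]. intros [r [Hra Hrb]] E. unfold grig_le, pdom in *; simpl in *.
  assert (a0 = b0) as <-.
  { apply functional_extensionality. intro x. specialize (E x).
    destruct (a0 x) as [c|] eqn:Ea, (b0 x) as [c'|] eqn:Eb; try (exfalso; intuition discriminate).
    - pose proof (Hra x c Ea). pose proof (Hrb x c' Eb). congruence.
    - reflexivity. }
  f_equal. apply proof_irrelevance.
Qed.

Definition dom_exactly (I : nset) (a : Grig U) : Prop := forall x, pdom (proj1_sig a) x <-> I x.

Lemma dom_exactly_max_antichain (I : nset) :
  dual_ideal U I -> max_antichain (@grig_le U) (dom_exactly I).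
Proof.
  intro HI. split.
  - intros a b Ha Hb Hne Hab. apply Hne, compatible_same_dom_eq; auto.
    intro x. rewrite (Ha x), (Hb x). reflexivity.
  - intro p. exists (fill_cond p I HI (fun _ => false)). split.
    + intro x. apply pdom_fill_on.
    + apply fill_cond_compatible.
Qed.

Section AxiomA.
Variable len : nat -> Grig U -> Grig U -> Prop.
Hypothesis len_le0 : forall p q, len 0 p q -> grig_le p q.
Hypothesis len_S : forall n p q, len (S n) p q -> len n p q.
Hypothesis len_fusion : forall ps : nat -> Grig U, (forall n, len n (ps (S n)) (ps n)) ->
  exists q, forall n, len n q (ps n).
Hypothesis len_bound : forall (p : Grig U) (n : nat) (T : Type) (A : Grig U -> Prop) (f : Grig U -> T),
  max_antichain (@grig_le U) A ->
  exists q (B : T -> Prop), len n q p /\ countable B /\ forces_in (@grig_le U) q A f B.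

Lemma len_grig_le n p q : len n p q -> grig_le p q.
Proof. induction n; auto. Qed.

Lemma len_cofinite_domain (p : Grig U) (n : nat) (I : nset) :
  dual_ideal U I -> exists q, len n q p /\ finite (fun x => I x /\ proj1_sig q x = None).
Proof.
  intro HI.
  destruct (len_bound p n _ (dom_exactly I) (@proj1_sig _ _) (dom_exactly_max_antichain I HI))
    as (q & B & Hq & HB & Hforce).
  exists q. split; [exact Hq|]. apply NNPP. intro Hinf.
  destruct (countable_escape B _ HB Hinf) as [d Hd].
  assert (Hfill : B (proj1_sig (fill_cond q I HI d))).
  { apply Hforce; [intro x; apply pdom_fill_on | apply fill_cond_compatible]. }
  destruct (Hd _ Hfill) as (x & [Ix qx] & Hx). apply Hx, fill_on_undef; assumption.
Qed.

Definition step (n : nat) (p : Grig U) (I : nset) : Grig U :=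
  epsilon (inhabits p)
    (fun q => len n q p /\ (dual_ideal U I -> finite (fun x => I x /\ proj1_sig q x = None))).

Lemma step_spec n p I : dual_ideal U I ->
  len n (step n p I) p /\ finite (fun x => I x /\ proj1_sig (step n p I) x = None).
Proof.
  intro HI. unfold step.
  match goal with |- context [epsilon ?i ?P] => assert (Hspec : P (epsilon i P)) end.
  { apply epsilon_spec. destruct (len_cofinite_domain p n I HI) as (q & Hq & Hfin). eauto. }
  destruct Hspec as [Hlen Hfin]. auto.
Qed.

Fixpoint conds (Is : nat -> nset) (n : nat) : Grig U :=
  match n with 0 => empty_cond | S n => step n (conds Is n) (Is n) end.

Lemma conds_ext Is Js n : (forall k, k < n -> Is k = Js k) -> conds Is n = conds Js n.
Proof.
  induction n as [|n IH]; intro E; simpl; auto.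
  rewrite IH, E by auto. reflexivity.
Qed.

Definition strategy : strategyII :=
  fun moves x =>
    let Is k := nth k moves (fun _ => False) in
    Is (pred (length moves)) x /\ proj1_sig (conds Is (length moves)) x = None.

Lemma strategy_play Is n x :
  strategy (map Is (seq 0 (S n))) x <-> Is n x /\ proj1_sig (conds Is (S n)) x = None.
Proof.
  unfold strategy. rewrite length_map, length_seq, nth_map_seq0 by lia. simpl pred.
  rewrite (conds_ext _ Is (S n)) by (intros; apply nth_map_seq0; lia). reflexivity.
Qed.

Lemma strategy_winning : winning_II U strategy.
Proof.
  intros Is HIs [_ Hcover]. simpl.
  pose (ps := conds Is).
  assert (Hstep : forall n, len n (ps (S n)) (ps n)
                    /\ finite (fun x => Is n x /\ proj1_sig (ps (S n)) x = None))
    by (intro n; apply step_spec, HIs).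
  split.
  - intro n. split.
    + destruct (proj2 (Hstep n)) as [l Hl]. exists l. intros x Hx. apply Hl, strategy_play, Hx.
    + intros x Hx. apply strategy_play, Hx.
  - destruct (len_fusion ps (fun n => proj1 (Hstep n))) as [q Hq].
    destruct (proj2_sig q) as [X [HX Hdom]].
    destruct HU as [Hup _]. apply Hup with (1 := HX).
    intros x Xx. destruct (Hcover x) as [m Hm]. exists m. apply strategy_play. split; [exact Hm|].
    destruct (proj1_sig (ps (S m)) x) as [b|] eqn:E; [exfalso | exact E].
    apply (proj1 (Hdom x)); [|exact Xx].
    pose proof (len_grig_le _ _ _ (Hq (S m)) x b E) as Hqx. unfold pdom. intro Hn.
    assert (Some b = None) as Habsurd by (rewrite <- Hqx; exact Hn). discriminate.
Qed.

End AxiomA.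
End GrigorieffConditions.

Theorem lemma1 (U : nset -> Prop) :
  p_point U ->
  AxiomA (@grig_le U) ->
  exists sigma : strategyII, winning_II U sigma.
Proof.
  intros [HU _] (len & _ & Hle0 & HS & Hfusion & Hbound).
  exists (strategy U HU len). apply strategy_winning; assumption.
Qed.
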